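(* Let $n$ and $0<n_1<\cdots<n_d<n$ be integers with $m_1=n_1$, $m_k=n_k-n_{k-1}$ ($2\le k\le d$), $m_{d+1}=n-n_d$, and regard $\mathrm{Flag}(n_1,\dots,n_d;n)=\{(VJ_1V^{\mathsf T},\dots,VJ_dV^{\mathsf T}):V\in\mathrm{O}(n)\}$ as a submanifold of $(\mathbb{R}^{n\times n})^d$ with the Frobenius inner product. Let $V(t)$ be a differentiable curve in $\mathrm{O}(n)$, $\Lambda(t)=V(t)^{\mathsf T}\dot V(t)\in\mathfrak{so}(n)$, with $\Lambda(p,p)(t)\equiv0$ for $p=1,\dots,d+1$, let $c(t)=V(t)(J_1,\dots,J_d)V(t)^{\mathsf T}$ and \[ T_3(t)=V(t)\big(\Lambda(t)J_1\Lambda(t),\dots,\Lambda(t)J_d\Lambda(t)\big)V(t)^{\mathsf T}. \] Then the orthogonal projection of $T_3(t)$ onto $\mathbb{T}_{c(t)}\mathrm{Flag}(n_1,\dots,n_d;n)$ equals $V(t)(X_1,\dots,X_d)V(t)^{\mathsf T}$, where each $X_k$ is a symmetric matrix whose $(p,q)$ block vanishes for every $(p,q)$ other than $(k,d+1)$ and $(d+1,k)$. Moreover, writing $\Lambda(t)=\begin{bmatrix}\Lambda_0(t)&\Lambda_1(t)\\-\Lambda_1(t)^{\mathsf T}&0\end{bmatrix}$ with $\Lambda_0(t)\in\mathfrak{so}(n-m_{d+1})$ and $\Lambda_1(t)\in\mathbb{R}^{(n-m_{d+1})\times m_{d+1}}$, one has \[ \begin{bmatrix}X_1(1,d+1)\\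 \vdots\\ X_d(d,d+1)\end{bmatrix}=-\Lambda_0(t)\Lambda_1(t). \]
   Context: $J_k=\operatorname{diag}(-I_{m_1},\dots,-I_{m_{k-1}},I_{m_k},-I_{m_{k+1}},\dots,-I_{m_{d+1}})$. $V(X_1,\dots,X_d)V^{\mathsf T}$ denotes $(VX_1V^{\mathsf T},\dots,VX_dV^{\mathsf T})$. For an $n\times n$ matrix $M$, $M(p,q)$ denotes its $(p,q)$ block in the partition $n=m_1+\cdots+m_{d+1}$. *)

From HB Require Import structures.
From mathcomp Require Import all_boot all_order all_algebra.
From mathcomp Require Import all_classical all_reals all_analysis.
Set Implicit Arguments. Unset Strict Implicit. Unset Printing Implicit Defensive.
Import Order.TTheory GRing.Theory Num.Theory.
Import numFieldNormedType.Exports.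
Local Open Scope ring_scope.

(* Partition n = m_1 + ... + m_{d+1} given by the thresholds
   ns : 'I_d -> nat, where ns k is the paper's n_{k+1} (0-based index k).  Block p (0-based)
   is the paper's block p+1; block d is the paper's block d+1. *)
Definition blk (d n : nat) (ns : 'I_d -> nat) (i : 'I_n) : nat :=
  #|[set k : 'I_d | (ns k <= i)%N]|.

(* J_k (paper's J_{k+1} for k : 'I_d): diagonal, +1 on block k, -1 elsewhere *)
Definition Jmx (R : realType) (d n : nat) (ns : 'I_d -> nat) (k : 'I_d)
  : 'M[R]_n :=
  \matrix_(i, j) (if i == j then (if blk ns i == k then 1 else -1) else 0).

Arguments Jmx R {d n} ns k.

Definition is_orthogonal_mx (R : realType) (n : nat) (V : 'M[R]_n) : Prop :=
  V^T *m V = 1%:M.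

Definition in_flag (R : realType) (d n : nat) (ns : 'I_d -> nat)
  (X : 'I_d -> 'M[R]_n) : Prop :=
  exists V : 'M[R]_n, is_orthogonal_mx V /\ forall k, X k = V *m Jmx R ns k *m V^T.

Definition frob (R : realType) (d n : nat) (A B : 'I_d -> 'M[R]_n) : R :=
  \sum_(k < d) \sum_(i < n) \sum_(j < n) A k i j * B k i j.

Definition tangent_flag (R : realType) (d n : nat) (ns : 'I_d -> nat)
  (c0 Y : 'I_d -> 'M[R]_n) : Prop :=
  exists c : R -> 'I_d -> 'M[R]_n,
    (forall s, in_flag ns (c s)) /\ c 0 = c0 /\
    (forall k, derivable (fun s => c s k) 0 1) /\
    (forall k, 'D_1 (fun s => c s k) 0 = Y k).

Definition is_orth_proj (R : realType) (d n : nat)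
  (S : ('I_d -> 'M[R]_n) -> Prop) (x y : 'I_d -> 'M[R]_n) : Prop :=
  S y /\ forall z, S z -> frob (fun k => x k - y k) z = 0.

From HB Require Import structures.
From mathcomp Require Import all_boot all_order all_algebra.
From mathcomp Require Import all_classical all_reals all_analysis.
From mathcomp Require Import zify lra.
Set Implicit Arguments. Unset Strict Implicit. Unset Printing Implicit Defensive.
Import Order.TTheory GRing.Theory Num.Theory.
Import numFieldNormedType.Exports.
Local Open Scope ring_scope.

(* In the frame of V, i.e. after conjugating by V(t), the point c(t) of the
   flag manifold becomes (J_1, ..., J_d).  On the whole manifold c_k^2 = 1 and
   (c_k + 1)(c_l + 1) = 0 for k <> l; differentiating these identities shows
   that a tangent vector (Z_k) at (J_k) has Z_k(p,q) = 0 unless exactly one of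
   p, q equals k, and Z_p(p,q) + Z_q(p,q) = 0 for distinct p, q <= d.  As the
   diagonal blocks of the skew matrix Lam vanish, Lam J_k Lam coincides with
   -Lam^2 on the blocks (k,q) and (q,k); hence the residual Lam J_k Lam - X_k is
   orthogonal to all such (Z_k) once X_k equals -Lam^2 = -Lam_0 Lam_1 on
   the blocks (k,d+1), (d+1,k) and vanishes elsewhere.  This X_k is the
   commutator [Omega, J_k] with Omega the skew matrix (S - S^T)/2, S the
   zero-padded Lam_0 Lam_1, so V X V^T is the velocity at 0 of the curve
   V Q(s) J_k Q(s)^T V^T, where Q(s) is the Cayley transform of s Omega / 2;
   hence it is tangent and is the orthogonal projection of T_3. *)

Section MatrixDerivative.
Variable R : realType.

Lemma is_derive_mxP m p (M : R -> 'M[R]_(m, p)) (t : R) (dM : 'M[R]_(m, p)) :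
  is_derive t 1 M dM <-> forall i j, is_derive t 1 (fun s => M s i j) (dM i j).
Proof.
split=> [dMt i j | dMij].
- have /derivable_mxP dij : derivable M t 1 by [].
  split; first exact: dij.
  by rewrite -(derive_val (is_derive := dMt)) derive_mx // mxE.
- have dMt : derivable M t 1 by apply/derivable_mxP => i j; exact: ex_derive.
  split=> //; apply/matrixP => i j.
  by rewrite derive_mx // mxE derive_val.
Qed.

Global Instance is_derive_mulmx m p q (A : R -> 'M[R]_(m, p))
    (B : R -> 'M[R]_(p, q)) (t : R) (dA : 'M[R]_(m, p)) (dB : 'M[R]_(p, q)) :
  is_derive t 1 A dA -> is_derive t 1 B dB ->
  is_derive t 1 (fun s => A s *m B s) (dA *m B t + A t *m dB).
Proof.
move=> /is_derive_mxP dAt /is_derive_mxP dBt; apply/is_derive_mxP => i j.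
have -> : (fun s => (A s *m B s) i j) =
    \sum_(l < p) (fun s => A s i l * B s l j).
  by apply/funext => s; rewrite fct_sumE mxE.
apply: is_derive_eq; rewrite !mxE -big_split /=.
by apply: eq_bigr => l _; rewrite addrC; congr (_ + _); exact: mulrC.
Qed.

Global Instance is_derive_trmx m p (A : R -> 'M[R]_(m, p)) (t : R)
    (dA : 'M[R]_(m, p)) :
  is_derive t 1 A dA -> is_derive t 1 (fun s => (A s)^T) dA^T.
Proof.
move=> /is_derive_mxP dAt; apply/is_derive_mxP => i j; rewrite mxE.
under eq_fun do rewrite mxE.
exact: dAt.
Qed.

Global Instance is_derive_scalel m p (N : 'M[R]_(m, p)) (t : R) :
  is_derive t 1 (fun s : R => s *: N) N.
Proof.
apply: DeriveDef; first exact/diff_derivable.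
by rewrite deriveE // diff_val scale1r.
Qed.

Lemma is_derive_affine m p (M N : 'M[R]_(m, p)) (t : R) :
  is_derive t 1 (fun s : R => M + s *: N) N.
Proof.
rewrite -[X in is_derive _ _ X _]/(cst M + (fun s : R => s *: N)).
apply: is_derive_eq (is_deriveD (is_derive_cst M t 1) (is_derive_scalel N t)) _.
exact: add0r.
Qed.

Lemma derive_mulmx_const_eq0 m p q (A : R -> 'M[R]_(m, p))
    (B : R -> 'M[R]_(p, q)) (t : R) (dA : 'M[R]_(m, p)) (dB : 'M[R]_(p, q)) C :
  is_derive t 1 A dA -> is_derive t 1 B dB -> (forall s, A s *m B s = C) ->
  dA *m B t + A t *m dB = 0.
Proof.
move=> dAt dBt ABC.
rewrite -(derive_val (is_derive := is_derive_mulmx dAt dBt)).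
by under eq_fun do rewrite ABC; exact: derive_cst.
Qed.

(* [invmx] is the identity on singular matrices, so invertibility is needed
   at every [s] for the entries to be rational functions of [s]. *)
Lemma derivable_invmx_poly n (P : 'M[{poly R}]_n) (t : R) :
  (forall s : R, map_mx (horner_eval s) P \in unitmx) ->
  derivable (fun s : R => invmx (map_mx (horner_eval s) P)) t 1.
Proof.
move=> Punit; apply/derivable_mxP => i j.
have -> : (fun s : R => invmx (map_mx (horner_eval s) P) i j) =
    ((fun s : R => ((\det P).[s])^-1) * horner (\adj P i j))%R.
  by apply/funext => s; rewrite /invmx Punit mxE det_map_mx -map_mx_adj mxE.
apply: derivableM; last exact: derivable_horner.
apply: derivableV; last exact: derivable_horner.
by have := Punit t; rewrite unitmxE det_map_mx unitfE.
Qed.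

End MatrixDerivative.

Lemma row_dot_self_eq0 (R : realDomainType) n (v : 'rV[R]_n) :
  v *m v^T = 0 -> v = 0.
Proof.
move=> /matrixP/(_ 0 0); rewrite !mxE => vv0.
have /psumr_eq0P v2_eq0 : \sum_(k < n) v 0 k ^+ 2 = 0.
  by rewrite -[RHS]vv0; apply: eq_bigr => k _; rewrite mxE expr2.
apply/rowP => k; apply/eqP; rewrite mxE -sqrf_eq0 v2_eq0 // => l _.
exact: sqr_ge0.
Qed.

Section Cayley.
Variables (R : realType) (n : nat) (W : 'M[R]_n).
Hypothesis W_skew : W^T = - W.

Lemma skew_form_eq0 (v : 'rV[R]_n) : v *m W *m v^T = 0.
Proof.
set w := v *m W *m v^T.
have wN : w^T = - w by rewrite /w !trmx_mul trmxK W_skew mulNmx mulmxN mulmxA.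
apply/matrixP => i j; rewrite !ord1 mxE.
have /matrixP/(_ 0 0) := wN; rewrite !mxE => /eqP.
by rewrite -addr_eq0 -mulr2n mulrn_eq0 /= => /eqP.
Qed.

Lemma unitmx_1_sub_skew (s : R) : 1%:M - s *: W \in unitmx.
Proof.
rewrite -row_free_unit; apply/inj_row_free => v.
rewrite mulmxBr mulmx1 => /eqP; rewrite subr_eq0 => /eqP v_eq.
apply: row_dot_self_eq0.
by rewrite {1}v_eq -scalemxAr -scalemxAl skew_form_eq0 scaler0.
Qed.

Definition cayley (s : R) : 'M[R]_n :=
  (1%:M + s *: W) *m invmx (1%:M - s *: W).

Lemma cayley_orthogonal s : is_orthogonal_mx (cayley s).
Proof.
set a := s *: W.
have Aunit : 1%:M - a \in unitmx := unitmx_1_sub_skew s.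
have Punit : 1%:M + a \in unitmx.
  by have := unitmx_1_sub_skew (- s); rewrite scaleNr opprK.
have PT : (1%:M + a)^T = 1%:M - a.
  by rewrite linearD /= linearZ /= trmx1 W_skew scalerN.
have AT : (1%:M - a)^T = 1%:M + a by rewrite -PT trmxK.
have PA : (1%:M + a) *m (1%:M - a) = (1%:M - a) *m (1%:M + a).
  rewrite mulmxDl mulmxBl !mul1mx mulmxBr mulmxDr !mulmx1.
  by rewrite addrA subrK opprD addrA addrK.
rewrite /is_orthogonal_mx /cayley -/a trmx_mul PT trmx_inv AT !mulmxA.
by rewrite -[invmx _ *m _ *m _]mulmxA -PA !mulmxA mulVmx // mul1mx mulmxV.
Qed.

Lemma cayley0 : cayley 0 = 1%:M.
Proof. by rewrite /cayley scale0r addr0 subr0 invmx1 mulmx1. Qed.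

Lemma is_derive_cayley0 : is_derive (0 : R) 1 cayley (W *+ 2).
Proof.
pose A (s : R) := 1%:M - s *: W.
pose B (s : R) := invmx (A s).
have A_poly s : A s = map_mx (horner_eval s) (1%:M - 'X *: map_mx polyC W).
  by apply/matrixP => i j; rewrite !mxE /horner_eval !(hornerE, hornerMn).
have dA : is_derive (0 : R) 1 A (- W).
  by rewrite /A; under eq_fun do rewrite -scalerN; exact: is_derive_affine.
have dB : is_derive (0 : R) 1 B ('D_1 B 0).
  apply: derivableP; rewrite /B; under eq_fun do rewrite A_poly.
  by apply: derivable_invmx_poly => s; rewrite -A_poly unitmx_1_sub_skew.
have A0 : A 0 = 1%:M by rewrite /A scale0r subr0.
have B0 : B 0 = 1%:M by rewrite /B A0 invmx1.
have DB0 : 'D_1 B 0 = W.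
  have := derive_mulmx_const_eq0 dA dB (fun s => mulmxV (unitmx_1_sub_skew s)).
  by rewrite A0 B0 mulmx1 mul1mx => /eqP; rewrite addrC subr_eq0 => /eqP.
have := is_derive_mulmx (is_derive_affine 1%:M W 0) dB.
by rewrite B0 DB0 scale0r addr0 mulmx1 mul1mx.
Qed.

End Cayley.

Lemma exists_orthogonal_curve (R : realType) n (Om : 'M[R]_n) : Om^T = - Om ->
  exists Q : R -> 'M[R]_n,
    [/\ forall s, is_orthogonal_mx (Q s), Q 0 = 1%:M
       & is_derive (0 : R) 1 Q Om].
Proof.
move=> Om_skew; pose W := 2^-1 *: Om.
have W_skew : W^T = - W by rewrite /W linearZ /= Om_skew scalerN.
exists (cayley W); split; [exact: cayley_orthogonal | exact: cayley0 |].
have -> : Om = W *+ 2.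
  by rewrite /W -scaler_nat scalerA mulrC mulVf ?scale1r ?pnatr_eq0.
exact: is_derive_cayley0.
Qed.

Section OrthogonalMatrix.
Variables (R : realType) (n : nat).
Implicit Types V A B Y : 'M[R]_n.

Lemma orthogonal_mulmx V W : is_orthogonal_mx V -> is_orthogonal_mx W ->
  is_orthogonal_mx (V *m W).
Proof.
rewrite /is_orthogonal_mx => VV WW.
by rewrite trmx_mul mulmxA -(mulmxA _ _ V) VV mulmx1.
Qed.

Lemma orthogonal_conj_mul V A B : is_orthogonal_mx V ->
  V *m A *m V^T *m (V *m B *m V^T) = V *m (A *m B) *m V^T.
Proof. by move=> VV; rewrite !mulmxA -(mulmxA _ V^T) VV mulmx1. Qed.

Lemma orthogonal_conj_add1 V A : is_orthogonal_mx V ->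
  V *m A *m V^T + 1%:M = V *m (A + 1%:M) *m V^T.
Proof. by move=> VV; rewrite mulmxDr mulmxDl mulmx1 (mulmx1C VV). Qed.

Lemma orthogonal_frame_change V Y Y' A B : is_orthogonal_mx V ->
  V^T *m (Y *m (V *m A *m V^T) + (V *m B *m V^T) *m Y') *m V =
  (V^T *m Y *m V) *m A + B *m (V^T *m Y' *m V).
Proof.
move=> VV; rewrite mulmxDr mulmxDl; congr (_ + _).
  by rewrite -!mulmxA VV mulmx1 !mulmxA.
by rewrite !mulmxA VV mul1mx.
Qed.

Lemma orthogonal_velocity_skew (V : R -> 'M[R]_n) (t : R) :
  (forall s, is_orthogonal_mx (V s)) -> derivable V t 1 ->
  ((V t)^T *m 'D_1 V t)^T = - ((V t)^T *m 'D_1 V t).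
Proof.
move=> VV /derivableP dV; apply/eqP; rewrite -addr_eq0 trmx_mul trmxK.
by rewrite (derive_mulmx_const_eq0 (is_derive_trmx dV) dV VV).
Qed.

End OrthogonalMatrix.

Lemma frob_conj (R : realType) d n (V : 'M[R]_n) (A Z : 'I_d -> 'M[R]_n) :
  frob (fun k => V *m A k *m V^T) Z = frob A (fun k => V^T *m Z k *m V).
Proof.
have frob_tr (M N : 'M[R]_n) :
    \sum_(i < n) \sum_(j < n) M i j * N i j = \tr (M^T *m N).
  rewrite /mxtrace exchange_big; apply: eq_bigr => j _; rewrite mxE.
  by apply: eq_bigr => i _; rewrite mxE.
apply: eq_bigr => k _; rewrite !frob_tr !trmx_mul !trmxK.
by rewrite -[in LHS]mulmxA (mxtrace_mulC V) !mulmxA.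
Qed.

Section Flag.
Variables (R : realType) (d n : nat) (ns : 'I_d -> nat).
Local Notation J := (@Jmx R d n ns).

Lemma blk_le (i : 'I_n) : (blk ns i <= d)%N.
Proof. by rewrite /blk (leq_trans (max_card _)) ?card_ord. Qed.

Definition blksgn (k : 'I_d) : 'rV[R]_n :=
  \row_i (if blk ns i == k then 1 else -1).

Lemma Jmx_diag k : J k = diag_mx (blksgn k).
Proof.
by apply/matrixP => i j; rewrite !mxE; case: eqP => [->|_]; rewrite ?mulr1n.
Qed.

Lemma mulmx_Jmx_r m (M : 'M[R]_(m, n)) k i j :
  (M *m J k) i j = M i j * blksgn k 0 j.
Proof. by rewrite Jmx_diag mul_mx_diag mxE. Qed.

Lemma mulmx_Jmx_l m (M : 'M[R]_(n, m)) k i j :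
  (J k *m M) i j = blksgn k 0 i * M i j.
Proof. by rewrite Jmx_diag mul_diag_mx mxE. Qed.

Lemma Jmx_sqr k : J k *m J k = 1%:M.
Proof.
rewrite Jmx_diag mulmx_diag -diag_const_mx; congr diag_mx.
by apply/rowP => i; rewrite !mxE; case: ifP; rewrite ?mulrNN mulr1.
Qed.

Lemma Jmx_add1_mul k l : k != l -> (J k + 1%:M) *m (J l + 1%:M) = 0.
Proof.
move=> kl; rewrite !Jmx_diag -diag_const_mx -!linearD mulmx_diag.
rewrite -(linear0 (@diag_mx R n)); congr diag_mx.
apply/rowP => i; rewrite !mxE.
case: (blk ns i =P k) => [ik|_]; case: (blk ns i =P l) => [il|_];
  rewrite ?addNr ?mul0r ?mulr0 //.
by move/eqP: kl; case; apply: val_inj; rewrite /= -ik -il.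
Qed.

Definition blkproj (p : nat) : 'M[R]_n :=
  diag_mx (\row_i (blk ns i == p)%:R).

Lemma trmx_blkproj p : (blkproj p)^T = blkproj p.
Proof. exact: tr_diag_mx. Qed.

Lemma Jmx_blkproj k : J k = 2 *: blkproj k - 1%:M.
Proof.
apply/matrixP => i j; rewrite !mxE; case: (i =P j) => [->|_]; last first.
  by rewrite !mulr0n mulr0 subr0.
by case: eqP => _; rewrite /= ?mulr1n ?mulr0n ?mulr1 ?mulr0; lra.
Qed.

Lemma in_flag_sqr (c : 'I_d -> 'M[R]_n) k : in_flag ns c -> c k *m c k = 1%:M.
Proof.
case=> V [VV ->]; rewrite orthogonal_conj_mul // Jmx_sqr mulmx1.
exact: mulmx1C VV.
Qed.

Lemma in_flag_add1_mul (c : 'I_d -> 'M[R]_n) k l : in_flag ns c -> k != l ->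
  (c k + 1%:M) *m (c l + 1%:M) = 0.
Proof.
case=> V [VV cE] kl; rewrite !cE !orthogonal_conj_add1 //.
rewrite orthogonal_conj_mul //.
by rewrite Jmx_add1_mul // mulmx0 mul0mx.
Qed.

Lemma tangent_flag_sqr (c0 Y : 'I_d -> 'M[R]_n) k : tangent_flag ns c0 Y ->
  Y k *m c0 k + c0 k *m Y k = 0.
Proof.
case=> c [c_flag [<- [dc Dc]]].
have dck : is_derive (0 : R) 1 (fun s => c s k) (Y k).
  by rewrite -Dc; exact: derivableP.
exact: (derive_mulmx_const_eq0 dck dck (fun s => in_flag_sqr k (c_flag s))).
Qed.

Lemma tangent_flag_add1_mul (c0 Y : 'I_d -> 'M[R]_n) k l :
  tangent_flag ns c0 Y -> k != l ->
  Y k *m (c0 l + 1%:M) + (c0 k + 1%:M) *m Y l = 0.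
Proof.
case=> c [c_flag [<- [dc Dc]]] kl.
have dc1 k' : is_derive (0 : R) 1 (fun s => c s k' + 1%:M) (Y k').
  rewrite -Dc -[X in is_derive _ _ X _]/((fun s => c s k') + cst 1%:M).
  apply: is_derive_eq
    (is_deriveD (derivableP (dc k')) (is_derive_cst 1%:M (0 : R) 1)) _.
  exact: addr0.
have cc1 s : (c s k + 1%:M) *m (c s l + 1%:M) = 0.
  exact: in_flag_add1_mul (c_flag s) kl.
exact: (derive_mulmx_const_eq0 (dc1 k) (dc1 l) cc1).
Qed.

Lemma tangent_flag_frame_sqr V (Y : 'I_d -> 'M[R]_n) k : is_orthogonal_mx V ->
  tangent_flag ns (fun k => V *m J k *m V^T) Y ->
  (V^T *m Y k *m V) *m J k + J k *m (V^T *m Y k *m V) = 0.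
Proof.
move=> VV /(tangent_flag_sqr k) /(congr1 (fun M => V^T *m M *m V)).
by rewrite orthogonal_frame_change // mulmx0 mul0mx.
Qed.

Lemma tangent_flag_frame_add1_mul V (Y : 'I_d -> 'M[R]_n) k l :
  is_orthogonal_mx V -> tangent_flag ns (fun k => V *m J k *m V^T) Y ->
  k != l ->
  (V^T *m Y k *m V) *m (J l + 1%:M) + (J k + 1%:M) *m (V^T *m Y l *m V) = 0.
Proof.
move=> VV /tangent_flag_add1_mul TY /TY /(congr1 (fun M => V^T *m M *m V)).
by rewrite !orthogonal_conj_add1 // orthogonal_frame_change // mulmx0 mul0mx.
Qed.

Lemma frame_tangent_support (Z : 'M[R]_n) k i j : Z *m J k + J k *m Z = 0 ->
  (blk ns i == k) = (blk ns j == k) -> Z i j = 0.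
Proof.
move=> /matrixP/(_ i j); rewrite mxE mulmx_Jmx_r mulmx_Jmx_l !mxE => + ij.
by rewrite ij; case: ifP => _; lra.
Qed.

Lemma frame_tangent_cross (Zk Zl : 'M[R]_n) (k l : 'I_d) i j :
  Zk *m (J l + 1%:M) + (J k + 1%:M) *m Zl = 0 ->
  blk ns i = k -> blk ns j = l -> Zk i j + Zl i j = 0.
Proof.
have addE (A B : 'M[R]_n) : (A + B) i j = A i j + B i j by rewrite mxE.
rewrite mulmxDr mulmxDl mulmx1 mul1mx => /matrixP/(_ i j).
rewrite !addE mulmx_Jmx_r mulmx_Jmx_l /blksgn !mxE => E bi bj.
by move: E; rewrite bi bj !eqxx; lra.
Qed.

Lemma tangent_flag_commutator V (Om : 'M[R]_n) (X : 'I_d -> 'M[R]_n) :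
  is_orthogonal_mx V -> Om^T = - Om ->
  (forall k, Om *m J k - J k *m Om = X k) ->
  tangent_flag ns (fun k => V *m J k *m V^T) (fun k => V *m X k *m V^T).
Proof.
move=> VV Om_skew OmJ; have [Q [QQ Q0 dQ]] := exists_orthogonal_curve Om_skew.
have dVQ : is_derive (0 : R) 1 (fun s => V *m Q s) (V *m Om).
  apply: is_derive_eq (is_derive_mulmx (is_derive_cst V (0 : R) 1) dQ) _.
  by rewrite mul0mx add0r.
have dc k : is_derive (0 : R) 1 (fun s => V *m Q s *m J k *m (V *m Q s)^T)
    (V *m X k *m V^T).
  apply: is_derive_eq (is_derive_mulmx (is_derive_mulmx dVQ
    (is_derive_cst (J k) (0 : R) 1)) (is_derive_trmx dVQ)) _.
  rewrite Q0 mulmx1 mulmx0 addr0 trmx_mul Om_skew mulNmx mulmxN.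
  by rewrite -OmJ mulmxBr mulmxBl !mulmxA.
exists (fun s k => V *m Q s *m J k *m (V *m Q s)^T); split; [|split; [|split]].
- by move=> s; exists (V *m Q s); split=> //; exact: orthogonal_mulmx.
- by apply/funext => k; rewrite Q0 mulmx1.
- by move=> k; exact: ex_derive.
- by move=> k; exact: derive_val.
Qed.

End Flag.

Section SkewBlockSquare.
Variables (R : realType) (d n : nat) (ns : 'I_d -> nat) (L : 'M[R]_n).
Hypothesis L_skew : L^T = - L.
Hypothesis L_diag_blocks : forall i j : 'I_n, blk ns i = blk ns j -> L i j = 0.
Local Notation J := (@Jmx R d n ns).
Local Notation E := (blkproj R n ns).

(* The paper's Lam_0 Lam_1, padded with zeros to an n x n matrix. *)
Definition Lam0_Lam1 : 'M[R]_n := \matrix_(i, j)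
  (if (blk ns i < d)%N && (blk ns j == d)
   then \sum_(l : 'I_n | (blk ns l < d)%N) L i l * L l j else 0).

Definition Xmx (k : 'I_d) : 'M[R]_n :=
  - (E k *m Lam0_Lam1 + Lam0_Lam1^T *m E k).

Definition Omega : 'M[R]_n := 2^-1 *: (Lam0_Lam1 - Lam0_Lam1^T).

Lemma Omega_skew : Omega^T = - Omega.
Proof. by rewrite /Omega linearZ /= linearB /= trmxK -scalerN opprB. Qed.

Lemma trmx_Xmx k : (Xmx k)^T = Xmx k.
Proof.
by rewrite /Xmx linearN /= linearD /= !trmx_mul trmxK trmx_blkproj addrC.
Qed.

Lemma Lam0_Lam1_blkproj (k : 'I_d) : Lam0_Lam1 *m E k = 0.
Proof.
apply/matrixP => i j; rewrite /blkproj mul_mx_diag !mxE.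
case: andP => [[_ /eqP ->]|_]; last by rewrite mul0r.
by rewrite (gtn_eqF (ltn_ord k)) mulr0.
Qed.

Lemma commutator_Omega_Jmx k : Omega *m J k - J k *m Omega = Xmx k.
Proof.
have EtS : E k *m Lam0_Lam1^T = 0.
  by rewrite -trmx_blkproj -trmx_mul Lam0_Lam1_blkproj trmx0.
rewrite /Omega Jmx_blkproj mulmxBr mulmxBl mulmx1 mul1mx.
rewrite -!scalemxAl -!scalemxAr !scalerA mulfV ?mulVf ?pnatr_eq0 // !scale1r.
rewrite opprB addrA subrK mulmxBl mulmxBr Lam0_Lam1_blkproj EtS.
by rewrite sub0r subr0 -opprD addrC.
Qed.

Lemma Xmx_entry k i j : Xmx k i j =
  - ((blk ns i == k)%:R * Lam0_Lam1 i j + Lam0_Lam1 j i * (blk ns j == k)%:R).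
Proof. by rewrite /Xmx /blkproj mul_diag_mx mul_mx_diag !mxE. Qed.

Lemma Xmx_support (k : 'I_d) (i j : 'I_n) :
  ~ ((blk ns i = k /\ blk ns j = d) \/ (blk ns i = d /\ blk ns j = k)) ->
  Xmx k i j = 0.
Proof.
move=> not_kd; rewrite Xmx_entry /Lam0_Lam1 !mxE.
have kd := ltn_ord k.
have [ik|ik] := eqVneq (blk ns i) k; have [jk|jk] := eqVneq (blk ns j) k.
- by rewrite ik jk (ltn_eqF kd) !andbF mulr0 mul0r addr0 oppr0.
- have /negPf -> : blk ns j != d by apply/eqP => jd; apply: not_kd; left.
  by rewrite andbF mulr0 mulr0 addr0 oppr0.
- have /negPf -> : blk ns i != d by apply/eqP => id; apply: not_kd; right.
  by rewrite andbF mul0r mul0r add0r oppr0.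
- by rewrite !mul0r mulr0 addr0 oppr0.
Qed.

Lemma Xmx_top_right (k : 'I_d) (i j : 'I_n) : blk ns i = k -> blk ns j = d ->
  Xmx k i j = - \sum_(l : 'I_n | (blk ns l < d)%N) L i l * L l j.
Proof.
move=> ik jd; have kd := ltn_ord k.
rewrite Xmx_entry /Lam0_Lam1 !mxE ik jd kd (gtn_eqF kd) !eqxx /=.
by rewrite ltnn mul1r mul0r addr0.
Qed.

Lemma sum_low_blocks_sqr (i j : 'I_n) : blk ns j = d ->
  \sum_(l : 'I_n | (blk ns l < d)%N) L i l * L l j = (L *m L) i j.
Proof.
move=> jd; rewrite mxE [RHS](bigID (fun l => (blk ns l < d)%N)) /=.
rewrite [X in _ = _ + X]big1 ?addr0 // => l; rewrite -leqNgt => dl.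
have ld : blk ns l = blk ns j by rewrite jd; apply/eqP; rewrite eqn_leq blk_le.
by rewrite (L_diag_blocks ld) mulr0.
Qed.

Lemma trmx_sqr_skew : (L *m L)^T = L *m L.
Proof. by rewrite trmx_mul L_skew mulNmx mulmxN opprK. Qed.

Lemma Xmx_entry_sqr (k : 'I_d) (i j : 'I_n) :
  (blk ns i = k /\ blk ns j = d) \/ (blk ns i = d /\ blk ns j = k) ->
  Xmx k i j = - (L *m L) i j.
Proof.
case=> [[ik jd]|[id jk]]; first by rewrite Xmx_top_right // sum_low_blocks_sqr.
have trE (A : 'M[R]_n) : A^T i j = A j i by rewrite mxE.
by rewrite -trmx_Xmx -trmx_sqr_skew !trE Xmx_top_right // sum_low_blocks_sqr.
Qed.

Lemma sandwich_Jmx_entry (k : 'I_d) (i j : 'I_n) :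
  blk ns i = k \/ blk ns j = k -> (L *m J k *m L) i j = - (L *m L) i j.
Proof.
move=> ij_k; rewrite !mxE -sumrN; apply: eq_bigr => l _.
rewrite mulmx_Jmx_r /blksgn mxE.
case: (blk ns l =P k) => [lk|_]; last by rewrite mulrN1 mulNr.
case: ij_k => [ik|jk].
  by rewrite [L i l]L_diag_blocks ?mul0r ?oppr0 // ik lk.
by rewrite [L l j]L_diag_blocks ?mulr0 ?oppr0 // jk lk.
Qed.

Lemma residual_last_block_entry_eq0 (Z : 'M[R]_n) (k : 'I_d) (i j : 'I_n) :
  Z *m J k + J k *m Z = 0 -> (d <= blk ns i)%N || (d <= blk ns j)%N ->
  ((L *m J k *m L) i j - Xmx k i j) * Z i j = 0.
Proof.
move=> Z_sqr ij_d.
have [e|ne] := eqVneq (blk ns i == k) (blk ns j == k).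
  by rewrite (frame_tangent_support Z_sqr e) mulr0.
have kd : (blk ns i = k /\ blk ns j = d) \/ (blk ns i = d /\ blk ns j = k).
  move: ij_d ne (ltn_ord k) (blk_le ns i) (blk_le ns j).
  move: (blk ns i) (blk ns j) => a b.
  by case: (a =P k) => [->|ak]; case: (b =P k) => [->|bk] //= *;
    [left | right]; lia.
rewrite sandwich_Jmx_entry ?Xmx_entry_sqr ?subrr ?mul0r //.
by case: kd => -[]; [left | right].
Qed.

Lemma frob_residual_tangent_frame_eq0 (Z : 'I_d -> 'M[R]_n) :
  (forall k, Z k *m J k + J k *m Z k = 0) ->
  (forall k l, k != l -> Z k *m (J l + 1%:M) + (J k + 1%:M) *m Z l = 0) ->
  frob (fun k => L *m J k *m L - Xmx k) Z = 0.
Proof.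
move=> Z_sqr Z_add1; rewrite /frob exchange_big; apply: big1 => i _.
rewrite exchange_big; apply: big1 => j _ /=.
have subE k : (L *m J k *m L - Xmx k) i j = (L *m J k *m L) i j - Xmx k i j.
  by rewrite !mxE.
have Z0 (k : 'I_d) : (blk ns i == k) = (blk ns j == k) -> Z k i j = 0.
  exact: frame_tangent_support (Z_sqr k).
have [ij|ij] := eqVneq (blk ns i) (blk ns j).
  by apply: big1 => k _; rewrite Z0 ?mulr0 // ij.
have [/andP[id jd]|not_low] := boolP ((blk ns i < d) && (blk ns j < d))%N;
  last first.
  apply: big1 => k _; rewrite subE.
  apply: residual_last_block_entry_eq0 (Z_sqr k) _.
  by move: not_low; rewrite negb_and -!leqNgt.
pose p := Ordinal id; pose q := Ordinal jd.
have pq : p != q by apply: contra_neq ij => /(congr1 val).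
rewrite (bigD1 p) // (bigD1 q) 1?eq_sym //= big1 ?addr0; last first.
  move=> k /andP[kp kq]; rewrite Z0 ?mulr0 //.
  rewrite -!(inj_eq val_inj) /= in kp kq.
  by rewrite eq_sym (negPf kp) eq_sym (negPf kq).
have [id' jd'] : blk ns i != d /\ blk ns j != d by rewrite !ltn_eqF.
rewrite !subE !Xmx_support; first last.
- by move=> [[_ /eqP]|[/eqP]]; rewrite ?(negPf id') ?(negPf jd').
- by move=> [[_ /eqP]|[/eqP]]; rewrite ?(negPf id') ?(negPf jd').
rewrite !sandwich_Jmx_entry; [|by right|by left].
have := frame_tangent_cross (Z_add1 p q pq) (erefl _) (erefl _).
by rewrite !subr0 -mulrDr => ->; rewrite mulr0.
Qed.

End SkewBlockSquare.

Theorem lemma3p8 (R : realType) (n d : nat) (ns : 'I_d -> nat)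
  (hd : (0 < d)%N)
  (hns_pos : forall k : 'I_d, (0 < ns k)%N)
  (hns_lt : forall k : 'I_d, (ns k < n)%N)
  (hns_inc : forall j k : 'I_d, (j < k)%N -> (ns j < ns k)%N)
  (V : R -> 'M[R]_n)
  (hVorth : forall t, is_orthogonal_mx (V t))
  (hVder : forall t, derivable V t 1)
  (hLdiag : forall t (i j : 'I_n), blk ns i = blk ns j ->
      ((V t)^T *m 'D_1 V t) i j = 0) :
  forall t : R,
    let Lam := (V t)^T *m 'D_1 V t in
    let c := fun k : 'I_d => V t *m Jmx R ns k *m (V t)^T in
    let T3 := fun k : 'I_d => V t *m (Lam *m Jmx R ns k *m Lam) *m (V t)^T in
    exists X : 'I_d -> 'M[R]_n,
      (forall k, (X k)^T = X k) /\
      (forall (k : 'I_d) (i j : 'I_n), ~ ((blk ns i = k /\ blk ns j = d) \/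
                                 (blk ns i = d /\ blk ns j = k)) ->
          X k i j = 0) /\
      is_orth_proj (tangent_flag ns c) T3 (fun k => V t *m X k *m (V t)^T) /\
      (forall (k : 'I_d) (i j : 'I_n), blk ns i = k -> blk ns j = d ->
          X k i j = - \sum_(l : 'I_n | (blk ns l < d)%N) Lam i l * Lam l j).
Proof.
move=> t Lam c T3.
have VV := hVorth t.
have Lam_skew : Lam^T = - Lam := orthogonal_velocity_skew hVorth (hVder t).
exists (Xmx ns Lam); split; first exact: trmx_Xmx.
split; first exact: Xmx_support.
split; last exact: Xmx_top_right.
split.
  apply: tangent_flag_commutator VV (Omega_skew ns Lam) _.
  exact: commutator_Omega_Jmx.
move=> Y TY.
have -> : (fun k => T3 k - V t *m Xmx ns Lam k *m (V t)^T) =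
    (fun k => V t *m (Lam *m Jmx R ns k *m Lam - Xmx ns Lam k) *m (V t)^T).
  by apply/funext => k; rewrite mulmxBr mulmxBl.
rewrite frob_conj.
apply: frob_residual_tangent_frame_eq0 Lam_skew (hLdiag t) _ _ _.
- by move=> k; exact: tangent_flag_frame_sqr VV TY.
- by move=> k l; exact: tangent_flag_frame_add1_mul VV TY.
Qed.
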